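(* Let $k \geq 2$ be an integer and suppose that for every admissible set $\mathcal{H}$ with $|\mathcal{H}| = k$, the difference set $\mathcal{D}(\mathcal{H})$ contains a weak Polignac number. Then \[ \liminf_{x \to \infty} \frac{\mathcal{P}(x)}{x} \;\geq\; \frac{2}{(k-1)\big((k-1)(k-2)+2\big)\,P(k)}. \]
   Context: A positive integer $d$ is a weak Polignac number if there are infinitely many pairs of primes $(p,q)$ with $q - p = d$. For real $x$, $\mathcal{P}(x)$ denotes the number of weak Polignac numbers less than or equal to $x$. A finite set of integers $\mathcal{H} = \{h_1, \ldots, h_k\}$ is admissible if for every prime $p$ there is an integer $m$ with $h_i \not\equiv m \pmod p$ for all $1 \le i \le k$. Its difference set is $\mathcal{D}(\mathcal{H}) = \{h_j - h_i : h_i, h_j \in \mathcal{H},\ h_i < h_j\}$. For an integer $k$, $P(k) = \prod_{p \le k,\ p \text{ prime}} p$ is the product of all primes not exceeding $k$. *)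

From Stdlib Require Import Reals ZArith Znumtheory List Classical ClassicalEpsilon.
Import ListNotations.

Open Scope Z_scope.

(* Since q is
   determined by p, "infinitely many pairs" is expressed as: p is unbounded. *)
Definition weak_polignac (d : Z) : Prop :=
  0 < d /\
  forall N : Z, exists p q : Z, N <= p /\ prime p /\ prime q /\ q - p = d.

(* A finite set of integers, represented by a duplicate-free list, is admissible. *)
Definition admissible (H : list Z) : Prop :=
  forall p : Z, prime p ->
    exists m : Z, forall h : Z, In h H -> h mod p <> m mod p.

Definition in_diff_set (H : list Z) (d : Z) : Prop :=
  exists hi hj : Z, In hi H /\ In hj H /\ hi < hj /\ d = hj - hi.

Definition primorial (k : nat) : Z :=
  fold_right Z.mul 1
    (filter (fun p => if prime_dec p then true else false)
            (map Z.of_nat (seq 0 (S k)))).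

Definition polignac_count_nat (n : nat) : nat :=
  length (filter
    (fun d : nat => if excluded_middle_informative (weak_polignac (Z.of_nat d))
                    then true else false)
    (seq 1 n)).

Definition polignac_count (x : R) : nat :=
  polignac_count_nat (Z.to_nat (Int_part x)).

Close Scope Z_scope.

(* Take the multiples of P = P(k) in [0, N P] and the set W of those j <= N
   for which j P is a weak Polignac number.  Any k of the numbers j P form an
   admissible set: they are all divisible by the primes p <= k, and k numbers
   cannot cover all residues modulo a prime p > k.  So by hypothesis no k
   numbers 0 <= j_1 < ... < j_k <= N have all their differences outside W.
   Choosing such j greedily, each choice rules out at most |W| later numbers,
   hence N + 1 <= (k - 1)(|W| + 1).  Thus the weak Polignac numbers have lower
   density at least 1 / ((k - 1) P), which is at least the claimed constant. *)

From Stdlib Require Import Reals ZArith Znumtheory List Sorted FinFun Lia Lra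
  Classical ClassicalEpsilon.
Import ListNotations.

Open Scope Z_scope.

Lemma StronglySorted_filter {A} (R : A -> A -> Prop) (f : A -> bool) (l : list A) :
  StronglySorted R l -> StronglySorted R (filter f l).
Proof.
  induction 1 as [|a l _ IH Ha]; simpl; [constructor|].
  destruct (f a); auto. constructor; auto.
  rewrite Forall_forall in *. intros x Hx. apply filter_In in Hx. apply Ha; tauto.
Qed.

Lemma StronglySorted_impl {A} (R R' : A -> A -> Prop) (l : list A) :
  (forall a b, R a b -> R' a b) -> StronglySorted R l -> StronglySorted R' l.
Proof.
  intros HRR'. induction 1; constructor; auto. eapply Forall_impl; [|eassumption]. auto.
Qed.

Lemma StronglySorted_In_cases {A} (R : A -> A -> Prop) (l : list A) (a b : A) :
  StronglySorted R l -> In a l -> In b l -> a = b \/ R a b \/ R b a.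
Proof.
  induction 1 as [|c l _ IH Hc]; simpl; [tauto|]. rewrite Forall_forall in Hc.
  intros [->|Ha] [->|Hb]; auto.
Qed.

Lemma StronglySorted_lt_NoDup (l : list Z) : StronglySorted Z.lt l -> NoDup l.
Proof.
  induction 1 as [|a l _ IH Ha]; constructor; auto.
  rewrite Forall_forall in Ha. intros Hin. specialize (Ha a Hin). lia.
Qed.

Lemma StronglySorted_lt_seq (a n : nat) : StronglySorted Z.lt (map Z.of_nat (seq a n)).
Proof.
  revert a; induction n as [|n IH]; intro a; simpl; constructor; auto.
  rewrite Forall_forall. intros x Hx. apply in_map_iff in Hx.
  destruct Hx as [i [<- Hi]]. apply in_seq in Hi. lia.
Qed.

Definition avoids_differences (W : list Z) (a b : Z) : Prop := a < b /\ ~ In (b - a) W.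

Lemma length_filter_translate_In (W l : list Z) (v : Z) : NoDup l ->
  (length (filter (fun r => if in_dec Z.eq_dec (r - v)%Z W then true else false) l)
   <= length W)%nat.
Proof.
  intros Hl. set (l' := filter _ l).
  rewrite <- (length_map (fun r => r - v) l'). apply NoDup_incl_length.
  - apply Injective_map_NoDup; [intros x y; lia|]. now apply NoDup_filter.
  - intros y Hy. apply in_map_iff in Hy. destruct Hy as [r [<- Hr]].
    apply filter_In in Hr. destruct Hr as [_ Hr].
    destruct (in_dec Z.eq_dec (r - v) W); [assumption | discriminate].
Qed.

(* Greedy choice: the head v of L is kept and the at most |W| elements r with
   r - v in W are discarded. *)
Lemma exists_sorted_avoiding_differences (W : list Z) (n : nat) (L : list Z) :
  StronglySorted Z.lt L -> (n * (length W + 1) < length L)%nat ->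
  exists H, length H = S n /\ StronglySorted (avoids_differences W) H /\ incl H L.
Proof.
  revert L; induction n as [|n IH]; intros [|v t] Hs Hlen; simpl in Hlen; try lia.
  - exists [v]. split; [reflexivity|]. split; [repeat constructor|].
    intros x [->|[]]; now left.
  - apply StronglySorted_inv in Hs as [Hs Hv]. rewrite Forall_forall in Hv.
    set (bad := fun r => if in_dec Z.eq_dec (r - v) W then true else false).
    set (good := fun r => negb (bad r)).
    assert (Hbad : (length (filter bad t) <= length W)%nat)
      by exact (length_filter_translate_In W t v (StronglySorted_lt_NoDup _ Hs)).
    assert (Hsplit := filter_length good t).
    replace (filter (fun x => negb (good x)) t) with (filter bad t) in Hsplit
      by (apply filter_ext; intros; unfold good; now rewrite Bool.negb_involutive).
    destruct (IH (filter good t)) as [H [Hlen' [HsH Hincl]]];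
      [now apply StronglySorted_filter | lia |].
    exists (v :: H). split; [simpl; lia|]. split.
    + constructor; auto. rewrite Forall_forall. intros r Hr.
      apply Hincl, filter_In in Hr as [Hr Hgood]. split; [now apply Hv|].
      unfold good, bad in Hgood. destruct in_dec; [discriminate | assumption].
    + intros x [->|Hx]; [now left|]. right. now apply Hincl, filter_In in Hx.
Qed.

Lemma avoids_differences_not_in_diff_set (W H : list Z) (d : Z) :
  StronglySorted (avoids_differences W) H -> in_diff_set H d -> ~ In d W.
Proof.
  intros HsH [a [b [Ha [Hb [Hab ->]]]]].
  destruct (StronglySorted_In_cases _ _ a b HsH Ha Hb) as [->|[[_ Hd]|[Hba _]]];
    [lia | assumption | lia].
Qed.

Lemma in_diff_set_scale (H : list Z) (q d : Z) : 0 < q ->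
  in_diff_set (map (fun j => j * q) H) d -> exists e, in_diff_set H e /\ d = e * q.
Proof.
  intros Hq [x [y [Hx [Hy [Hxy ->]]]]].
  apply in_map_iff in Hx as [a [<- Ha]]. apply in_map_iff in Hy as [b [<- Hb]].
  exists (b - a). split; [|lia]. exists a, b. repeat split; auto. nia.
Qed.

Lemma fold_right_mul_pos (l : list Z) :
  Forall (fun p => 0 < p) l -> 0 < fold_right Z.mul 1 l.
Proof. induction 1; simpl; lia. Qed.

Lemma fold_right_mul_divide (l : list Z) (p : Z) : In p l -> (p | fold_right Z.mul 1 l).
Proof.
  induction l as [|a l IH]; simpl; [tauto|]. intros [->|Hp].
  - apply Z.divide_factor_l.
  - now apply Z.divide_mul_r, IH.
Qed.

Lemma primorial_pos (k : nat) : 0 < primorial k.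
Proof.
  apply fold_right_mul_pos, Forall_forall. intros p Hp.
  apply filter_In in Hp as [_ Hp]. destruct (prime_dec p) as [Hprime|]; [|discriminate].
  pose proof (prime_ge_2 p Hprime). lia.
Qed.

Lemma prime_divide_primorial (k : nat) (p : Z) :
  prime p -> p <= Z.of_nat k -> (p | primorial k).
Proof.
  intros Hp Hpk. pose proof (prime_ge_2 p Hp).
  apply fold_right_mul_divide, filter_In. split.
  - apply in_map_iff. exists (Z.to_nat p). split; [lia|]. apply in_seq. lia.
  - now destruct (prime_dec p).
Qed.

Lemma exists_residue_avoiding (H : list Z) (p : Z) :
  0 < p -> (length H < Z.to_nat p)%nat ->
  exists m, forall h, In h H -> h mod p <> m mod p.
Proof.
  intros Hp Hlen. apply NNPP. intros Hnone.
  assert (Hcover : incl (map Z.of_nat (seq 0 (Z.to_nat p))) (map (fun h => h mod p) H)).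
  { intros y Hy. apply in_map_iff in Hy as [i [<- Hi]]. apply in_seq in Hi.
    apply NNPP. intros Hmiss. apply Hnone. exists (Z.of_nat i). intros h Hh Heq.
    apply Hmiss, in_map_iff. exists h. split; auto. rewrite Heq. apply Z.mod_small. lia. }
  apply NoDup_incl_length in Hcover.
  - rewrite !length_map, length_seq in Hcover. lia.
  - apply Injective_map_NoDup; [intros x y; lia | apply seq_NoDup].
Qed.

Lemma admissible_of_primorial_divide (H : list Z) :
  (forall h, In h H -> (primorial (length H) | h)) -> admissible H.
Proof.
  intros Hdiv p Hp. pose proof (prime_ge_2 p Hp).
  destruct (Z_le_gt_dec p (Z.of_nat (length H))) as [Hle|Hgt].
  - exists 1. intros h Hh.
    assert (Hph : (p | h)).
    { apply (Z.divide_trans _ (primorial (length H))); [|now apply Hdiv].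
      now apply prime_divide_primorial. }
    rewrite (Z.mod_small 1), (proj2 (Z.mod_divide h p ltac:(lia)) Hph); lia.
  - apply exists_residue_avoiding; lia.
Qed.

Definition weak_polignacb (d : Z) : bool :=
  if excluded_middle_informative (weak_polignac d) then true else false.

Lemma weak_polignacb_spec (d : Z) : weak_polignacb d = true <-> weak_polignac d.
Proof. unfold weak_polignacb. destruct excluded_middle_informative; intuition discriminate. Qed.

Lemma polignac_count_nat_filter (n : nat) :
  polignac_count_nat n = length (filter (fun d => weak_polignacb (Z.of_nat d)) (seq 1 n)).
Proof. reflexivity. Qed.

Definition polignac_multiples (q : Z) (N : nat) : list Z :=
  filter (fun j => weak_polignacb (j * q)) (map Z.of_nat (seq 1 N)).

Lemma length_polignac_multiples_le (q : Z) (N n : nat) :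
  0 < q -> (N * Z.to_nat q <= n)%nat ->
  (length (polignac_multiples q N) <= polignac_count_nat n)%nat.
Proof.
  intros Hq HNn. rewrite polignac_count_nat_filter.
  rewrite <- (length_map (fun j => Z.to_nat (j * q)) (polignac_multiples q N)).
  apply NoDup_incl_length.
  - apply Injective_map_NoDup_in.
    + intros x y Hx Hy. apply filter_In in Hx as [Hx _], Hy as [Hy _].
      apply in_map_iff in Hx as [i [<- _]], Hy as [j [<- _]]. nia.
    + apply NoDup_filter, Injective_map_NoDup; [intros x y; lia | apply seq_NoDup].
  - intros d Hd. apply in_map_iff in Hd as [j [<- Hj]].
    apply filter_In in Hj as [Hj Hpol]. apply in_map_iff in Hj as [i [<- Hi]].
    apply in_seq in Hi. apply filter_In. split.
    + apply in_seq. nia.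
    + now rewrite Z2Nat.id by lia.
Qed.

Section Density.

Variable k : nat.
Hypothesis hk : (2 <= k)%nat.
Hypothesis hyp : forall H : list Z, NoDup H -> length H = k -> admissible H ->
  exists d : Z, in_diff_set H d /\ weak_polignac d.

Lemma polignac_multiples_dense (N : nat) :
  (N + 1 <= (k - 1) * (length (polignac_multiples (primorial k) N) + 1))%nat.
Proof.
  set (q := primorial k). set (W := polignac_multiples q N).
  assert (Hq : 0 < q) by apply primorial_pos.
  apply Nat.nlt_ge. intros Hlt.
  destruct (exists_sorted_avoiding_differences W (k - 1) (map Z.of_nat (seq 0 (S N))))
    as [H [Hlen [HsH Hincl]]];
    [apply StronglySorted_lt_seq | rewrite length_map, length_seq; lia |].
  assert (HnodupH : NoDup H).
  { apply StronglySorted_lt_NoDup. eapply StronglySorted_impl; [|exact HsH]. now intros a b []. }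
  destruct (hyp (map (fun j => j * q) H)) as [d [Hd Hpol]].
  - apply Injective_map_NoDup; [intros x y; nia | assumption].
  - rewrite length_map. lia.
  - apply admissible_of_primorial_divide. rewrite length_map, Hlen.
    intros h Hh. apply in_map_iff in Hh as [j [<- _]].
    replace (S (k - 1)) with k by lia. apply Z.divide_factor_r.
  - destruct (in_diff_set_scale H q d Hq Hd) as [e [He ->]].
    apply (avoids_differences_not_in_diff_set W H e HsH He).
    destruct He as [a [b [Ha [Hb [Hab ->]]]]].
    apply Hincl, in_map_iff in Ha as [i [<- Hi]], Hb as [j [<- Hj]].
    apply in_seq in Hi, Hj. apply filter_In. split.
    + apply in_map_iff. exists (j - i)%nat. split; [lia|]. apply in_seq. lia.
    + now apply weak_polignacb_spec.
Qed.

Lemma polignac_count_nat_lower_bound (n : nat) :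
  (n + 1 <= (k - 1) * Z.to_nat (primorial k) * (polignac_count_nat n + 1))%nat.
Proof.
  set (P := Z.to_nat (primorial k)).
  assert (HP : (0 < P)%nat) by (pose proof (primorial_pos k); lia).
  assert (Hdense := polignac_multiples_dense (n / P)).
  assert (Hcount : (length (polignac_multiples (primorial k) (n / P)) <= polignac_count_nat n)%nat)
    by (apply length_polignac_multiples_le; [apply primorial_pos |];
        fold P; rewrite Nat.mul_comm; apply Nat.Div0.mul_div_le).
  pose proof (Nat.div_mod n P ltac:(lia)). pose proof (Nat.mod_upper_bound n P ltac:(lia)).
  nia.
Qed.

End Density.

Close Scope Z_scope.
Open Scope R_scope.

Lemma Int_part_lt_succ (x : R) : x < IZR (Int_part x) + 1.
Proof. pose proof (base_Int_part x). lra. Qed.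

Lemma INR_Z_to_nat_Int_part (x : R) : 0 <= x -> INR (Z.to_nat (Int_part x)) = IZR (Int_part x).
Proof.
  intros Hx. pose proof (base_Int_part x).
  assert (-1 < Int_part x)%Z by (apply lt_IZR; lra).
  rewrite INR_IZR_INZ, Z2Nat.id; [reflexivity | lia].
Qed.

Lemma density_constant_le (K P a : R) : 1 <= K -> 0 < P -> 0 <= a ->
  2 / (K * (K * a + 2) * P) <= 1 / (K * P).
Proof.
  intros HK HP Ha. assert (HKa : 0 < K * a + 2) by nra.
  assert (Hpos : 0 < K * (K * a + 2) * P)
    by (apply Rmult_lt_0_compat; [apply Rmult_lt_0_compat|]; lra).
  apply Rmult_le_reg_r with (K * (K * a + 2) * P); [exact Hpos|].
  replace (2 / (K * (K * a + 2) * P) * (K * (K * a + 2) * P)) with 2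
    by (field; repeat split; apply Rgt_not_eq; lra).
  replace (1 / (K * P) * (K * (K * a + 2) * P)) with (K * a + 2)
    by (field; split; apply Rgt_not_eq; lra).
  nra.
Qed.

Lemma inverse_lt_ratio_add_inverse (M c x : R) : 0 < M -> 0 < x ->
  x < M * (c + 1) -> 1 / M < c / x + / x.
Proof.
  intros HM Hx Hlt. apply Rmult_lt_reg_r with (M * x); [nra|].
  replace (1 / M * (M * x)) with x by (field; lra).
  replace ((c / x + / x) * (M * x)) with (M * (c + 1)) by (field; lra).
  lra.
Qed.

Theorem theorem2 (k : nat) (hk : (2 <= k)%nat)
  (hyp : forall H : list Z, NoDup H -> length H = k -> admissible H ->
           exists d : Z, in_diff_set H d /\ weak_polignac d) :
  forall eps : R, 0 < eps ->
    exists X : R, forall x : R, X <= x ->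
      2 / (INR (k - 1) * (INR (k - 1) * INR (k - 2) + 2) * IZR (primorial k)) - eps
        <= INR (polignac_count x) / x.
Proof.
  intros eps Heps. exists (1 + / eps). intros x Hx.
  assert (Hinv : 0 < / eps) by now apply Rinv_0_lt_compat.
  assert (Hxeps : / x <= eps)
    by (rewrite <- (Rinv_inv eps); apply Rinv_le_contravar; lra).
  set (P := Z.to_nat (primorial k)).
  assert (HP : IZR (primorial k) = INR P)
    by (pose proof (primorial_pos k); unfold P; now rewrite INR_IZR_INZ, Z2Nat.id by lia).
  assert (HK : 1 <= INR (k - 1)) by (apply (le_INR 1); lia).
  assert (HP1 : 1 <= INR P) by (apply (le_INR 1); pose proof (primorial_pos k); lia).
  assert (Hbound : x < INR (k - 1) * INR P * (INR (polignac_count x) + 1)).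
  { pose proof (polignac_count_nat_lower_bound k hk hyp (Z.to_nat (Int_part x))) as Hnat.
    apply le_INR in Hnat. fold P in Hnat.
    rewrite !mult_INR, !plus_INR, INR_Z_to_nat_Int_part in Hnat by lra.
    pose proof (Int_part_lt_succ x). unfold polignac_count. simpl INR in Hnat. lra. }
  pose proof (inverse_lt_ratio_add_inverse (INR (k - 1) * INR P) _ x
    ltac:(nra) ltac:(lra) Hbound).
  pose proof (density_constant_le (INR (k - 1)) (INR P) (INR (k - 2)) HK ltac:(lra) (pos_INR _)).
  rewrite HP. lra.
Qed.
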